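(* Let $C$ be a coalgebra over a field $K$ and let $(X_i)_{i\in L}$ be a family of nonzero right $C$-comodules such that $\Sigma=\bigoplus_{i\in L}X_i$ is quasi-finite. Then $\bigoplus_{i\in L}X_i=\prod^{C}_{i\in L}X_i$, where $\prod^C$ denotes the product in the category of right $C$-comodules, namely $\prod^C_{i\in L}X_i=\mathrm{Rat}\big(\prod_{i\in L}X_i\big)$ (the rational part of the direct product of left $C^*$-modules).
   Context: A right $C$-comodule $M$ is a left $C^*$-module via $c^*\cdot m=m_0c^*(m_1)$; for a left $C^*$-module $N$, $\mathrm{Rat}(N)$ is the largest submodule whose action arises from a right comodule structure in this way. A right comodule $M$ is quasi-finite if $\mathrm{Hom}^C(S,M)$ is finite dimensional for every simple right comodule $S$; equivalently, if $s(M)=\bigoplus_{l}M_l$ is a decomposition of the socle into simple comodules, then for each simple $S$ only finitely many $M_l$ are isomorphic to $S$. *)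

(* Since MathComp has no tensor product of
   arbitrary vector spaces, an element of V (x) W is represented by a finite
   list of pairs (its simple tensors), and two such lists are identified when
   they agree on every product of linear functionals f (x) g (this detects
   equality in V (x) W over a field). *)
From Stdlib Require List.
From HB Require Import structures.
From mathcomp Require Import all_boot all_order all_algebra.
Set Implicit Arguments. Unset Strict Implicit. Unset Printing Implicit Defensive.
Import Order.TTheory GRing.Theory Num.Theory.
Local Open Scope ring_scope.

Section Defs.
Variable K : fieldType.

Notation dual V := {linear V -> K^o}.

Definition tensor_eq (V W : lmodType K) (s t : seq (V * W)) : Prop :=
  forall (f : dual V) (g : dual W),
    \sum_(p <- s) ((f p.1 : K) * (g p.2 : K)) =
    \sum_(p <- t) ((f p.1 : K) * (g p.2 : K)).

Record coalgebra (C : lmodType K) := Coalgebra {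
  cDelta : C -> seq (C * C);
  ceps : dual C;
  cDelta_lin : forall (a : K) (x y : C),
    tensor_eq (cDelta (a *: x + y))
      ([seq (a *: p.1, p.2) | p <- cDelta x] ++ cDelta y);
  cDelta_coassoc : forall (c : C) (f g h : dual C),
    \sum_(p <- cDelta c)
        ((\sum_(q <- cDelta p.1) ((f q.1 : K) * (g q.2 : K))) * (h p.2 : K)) =
    \sum_(p <- cDelta c)
        ((f p.1 : K) * (\sum_(q <- cDelta p.2) ((g q.1 : K) * (h q.2 : K))));
  cDelta_counit : forall c : C,
    c = \sum_(p <- cDelta c) ((ceps p.1 : K) *: p.2) /\
    c = \sum_(p <- cDelta c) ((ceps p.2 : K) *: p.1)
}.

Record comodule (C : lmodType K) (cC : coalgebra C) (M : lmodType K) := Comodule {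
  crho : M -> seq (M * C);
  crho_lin : forall (a : K) (x y : M),
    tensor_eq (crho (a *: x + y))
      ([seq (a *: p.1, p.2) | p <- crho x] ++ crho y);
  crho_coassoc : forall (m : M) (f : dual M) (g h : dual C),
    \sum_(p <- crho m)
        ((\sum_(q <- crho p.1) ((f q.1 : K) * (g q.2 : K))) * (h p.2 : K)) =
    \sum_(p <- crho m)
        ((f p.1 : K) * (\sum_(q <- cDelta cC p.2) ((g q.1 : K) * (h q.2 : K))));
  crho_counit : forall m : M, m = \sum_(p <- crho m) ((ceps cC p.2 : K) *: p.1)
}.

Variables (C : lmodType K) (cC : coalgebra C).

Definition cact (M : lmodType K) (rM : comodule cC M) (cs : dual C) (m : M) : M :=
  \sum_(p <- crho rM m) ((cs p.2 : K) *: p.1).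

Definition comod_map (A B : lmodType K) (rA : comodule cC A) (rB : comodule cC B)
  (g : A -> B) : Prop :=
  (forall (a : K) (x y : A), g (a *: x + y) = a *: g x + g y) /\
  (forall x : A, tensor_eq [seq (g p.1, p.2) | p <- crho rA x] (crho rB (g x))).

Definition subcomod (M : lmodType K) (rM : comodule cC M) (P : M -> Prop) : Prop :=
  P 0 /\ (forall (a : K) (x y : M), P x -> P y -> P (a *: x + y)) /\
  (forall x : M, P x -> exists t : seq (M * C),
       tensor_eq (crho rM x) t /\ (forall p, List.In p t -> P p.1)).

Definition simple_comod (M : lmodType K) (rM : comodule cC M) : Prop :=
  (exists m : M, m <> 0) /\
  (forall P : M -> Prop, subcomod rM P ->
     (forall m, P m -> m = 0) \/ (forall m, P m)).

Variables (L : Type) (X : L -> lmodType K) (rX : forall i, comodule cC (X i)).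

(* finite support: x lies in the direct sum (+)_i X_i, viewed inside prod_i X_i *)
Definition fin_supp (x : forall i, X i) : Prop :=
  exists s : seq L, forall i, x i <> 0 -> List.In i s.

(* Hom^C(S, (+)_i X_i): comodule maps into the direct sum (whose coaction is
   componentwise), i.e. linear maps S -> prod_i X_i with finitely supported
   values whose components are comodule maps S -> X_i. *)
Definition dsum_hom (S : lmodType K) (rS : comodule cC S)
  (f : S -> forall i, X i) : Prop :=
  (forall s, fin_supp (f s)) /\ (forall i, comod_map rS (rX i) (fun s => f s i)).

(* (+)_i X_i is quasi-finite: Hom^C(S, (+)_i X_i) is finite dimensional for
   every simple right comodule S (spanned by finitely many elements). *)
Definition quasi_finite_dsum : Prop :=
  forall (S : lmodType K) (rS : comodule cC S), simple_comod rS ->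
    exists fs : seq (S -> forall i, X i),
      (forall f, List.In f fs -> dsum_hom rS f) /\
      (forall f, dsum_hom rS f ->
         exists cs : seq K, size cs = size fs /\
           forall s i, f s i = \sum_(p <- zip cs fs) (p.1 *: p.2 s i)).

(* The C^*-module prod_i X_i (componentwise action).  x belongs to
   Rat(prod_i X_i) iff x lies in some C^*-submodule whose C^*-action comes
   from a right comodule structure, i.e. x is in the image of an injective
   C^*-linear map phi : M -> prod_i X_i from a right comodule M. *)
Definition in_Rat_prod (x : forall i, X i) : Prop :=
  exists (M : lmodType K) (rM : comodule cC M) (phi : M -> forall i, X i),
    (forall (a : K) (m m' : M) i, phi (a *: m + m') i = a *: phi m i + phi m' i) /\
    (forall m m' : M, (forall i, phi m i = phi m' i) -> m = m') /\
    (forall (cs : dual C) (m : M) i, phi (cact rM cs m) i = cact (rX i) cs (phi m i)) /\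
    (exists m : M, forall i, phi m i = x i).

End Defs.

From Stdlib Require List.
From HB Require Import structures.
From mathcomp Require Import all_boot all_order all_algebra.
From mathcomp Require Import boolp classical_sets.

(* A finitely supported family lies in the product of finitely many X_i, an
   iterated binary product of comodules that embeds C*-linearly into the
   product of all X_i.  Conversely, let x = phi m with phi a C*-linear map
   from a comodule M.  Every C*-submodule E of the finite-dimensional orbit
   C* m has finite support, by induction on dim E: take a maximal proper
   submodule E1 of E.  For i outside supp E1, phi_i restricted to E factors
   through E / E1, which phi_i0 realizes as a simple comodule S for any i0 in
   supp E \ supp E1; this gives a nonzero comodule map S -> X_i for every new
   index i.  Maps into distinct summands are linearly independent in
   Hom^C(S, (+)_i X_i), so quasi-finiteness leaves only finitely many new
   indices.  Tensors are read through linear functionals, which exist on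
   arbitrary spaces by Zorn's lemma. *)

Set Implicit Arguments. Unset Strict Implicit. Unset Printing Implicit Defensive.
Import GRing.Theory.
Local Open Scope ring_scope.

Lemma exists_max_nat (P : nat -> Prop) b : (exists k, P k) -> (forall k, P k -> (k <= b)%N) ->
  exists k, P k /\ forall j, P j -> (j <= k)%N.
Proof.
move=> [k Pk] Pb.
have exP : exists k, `[< P k >] by exists k; exact: asboolT.
have ubP j : `[< P j >] -> (j <= b)%N by move/asboolP/Pb.
case: (ex_maxnP exP ubP) => m /asboolP Pm maxm.
by exists m; split => // j Pj; apply/maxm/asboolT.
Qed.

Section LinearAlgebra.
Variable K : fieldType.
Local Notation dual V := {linear V -> K^o}.

Lemma regular_scaleE (a b : K) : a *: (b : K^o) = a * b.
Proof. by []. Qed.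

Definition mklinear (U V : lmodType K) (f : U -> V) (fL : linear f) : {linear U -> V} :=
  HB.pack f (GRing.isLinear.Build K U V *:%R f fL).

Section Space.
Variable V : lmodType K.

Definition subspace (E : V -> Prop) :=
  E 0 /\ forall a x y, E x -> E y -> E (a *: x + y).

Lemma subspace_sum E I (s : seq I) (c : I -> K) (F : I -> V) :
  subspace E -> (forall i, E (F i)) -> E (\sum_(i <- s) c i *: F i).
Proof.
move=> [E0 El] EF; apply: big_ind => //.
  by move=> x y Ex Ey; have := El 1 _ _ Ex Ey; rewrite scale1r.
by move=> i _; have := El (c i) _ _ (EF i) E0; rewrite addr0.
Qed.

Lemma lincomb_is_linear r (e : 'I_r -> V) :
  linear (fun a : 'rV[K]_r => \sum_j a 0 j *: e j).
Proof.
move=> b a a'; rewrite scaler_sumr -big_split; apply: eq_bigr => j _.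
by rewrite !mxE scalerDl scalerA.
Qed.

Definition lincomb r (e : 'I_r -> V) : {linear 'rV[K]_r -> V} :=
  mklinear (lincomb_is_linear e).

Lemma lincombE r (e : 'I_r -> V) a : lincomb e a = \sum_j a 0 j *: e j.
Proof. by []. Qed.

Lemma lincomb_delta r (e : 'I_r -> V) k : lincomb e (delta_mx 0 k) = e k.
Proof.
rewrite lincombE (bigD1 k) //= big1 ?addr0 => [|j nj]; rewrite mxE !eqxx /=.
  by rewrite scale1r.
by rewrite (negbTE nj) scale0r.
Qed.

Lemma lincomb_mulmx m r (e : 'I_r -> V) (lam : 'rV[K]_m) (A : 'M[K]_(m, r)) :
  lincomb e (lam *m A) = \sum_j lam 0 j *: lincomb e (row j A).
Proof. by rewrite mulmx_sum_row linear_sum; apply: eq_bigr => j _; rewrite linearZ. Qed.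

Lemma lincomb_inj r (e : 'I_r -> V) :
  (forall a, lincomb e a = 0 -> a = 0) -> injective (lincomb e).
Proof.
move=> ker a b eab; apply/eqP; rewrite -subr_eq0; apply/eqP/ker.
by rewrite linearB eab subrr.
Qed.

Lemma subspace_lincomb E r (e : 'I_r -> V) a :
  subspace E -> (forall j, E (e j)) -> E (lincomb e a).
Proof. exact: subspace_sum. Qed.

Definition finitely_spanned (E : V -> Prop) := exists r (b : 'I_r -> V),
  (forall j, E (b j)) /\ forall z, E z -> exists c, z = lincomb b c.

Section Extension.
Local Open Scope classical_set_scope.

Definition linear_graph (G : set (V * K)) :=
  [/\ forall x k k', G (x, k) -> G (x, k') -> k = k',
      forall a x y k l, G (x, k) -> G (y, l) -> G (a *: x + y, a * k + l) &
      G (0, 0)].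

(* extend by the value 0 on [v] *)
Lemma linear_graph_adjoin G v : linear_graph G -> (forall k, ~ G (v, k)) ->
  linear_graph (fun p => exists y a, G (y, p.2) /\ p.1 = y + a *: v).
Proof.
move=> [fG lG G0] Gv; split.
- move=> x k k' [y [a [Gy /= ->]]] [y' [a' [Gy' /= e]]].
  have [aa'|neq] := eqVneq a a'.
    by move: e; rewrite aa' => /addIr ey; rewrite ey in Gy; exact: fG Gy'.
  exfalso; have : G (y' - y, k' - k).
    by have := lG (-1) _ _ _ _ Gy Gy'; rewrite !scaleN1r mulN1r addrC [_ + k']addrC.
  move=> /(fun H => lG ((a - a')^-1) _ _ _ _ H G0); rewrite !addr0.
  have -> : (a - a')^-1 *: (y' - y) = v.
    have naa' : a - a' != 0 by rewrite subr_eq0.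
    apply: (@scalerI _ _ (a - a')) => //; rewrite scalerA mulfV // scale1r.
    have -> : y' = y + a *: v - a' *: v by rewrite e addrK.
    by rewrite addrAC [y + _]addrC addrK scalerBl.
  exact: Gv.
- move=> b x x' k k' [y [a [Gy /= ->]]] [y' [a' [Gy' /= ->]]].
  exists (b *: y + y'), (b * a + a'); split; first exact: lG.
  by rewrite /= scalerDr scalerA scalerDl addrACA.
- by exists 0, 0; rewrite /= scale0r !addr0.
Qed.

Lemma linear_graph_chain_union G0 (F : set (set (V * K))) :
  linear_graph G0 -> (forall G, F G -> linear_graph (G `|` G0)) ->
  total_on F subset -> linear_graph ((\bigcup_(G in F) G) `|` G0).
Proof.
move=> gG0 FG tF; set U := _ `|` G0.
have sub G : F G -> G `|` G0 `<=` U by move=> FG' z [Gz|Gz]; [left; exists G | right].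
have common p q : U p -> U q -> exists H, [/\ linear_graph H, H p, H q & H `<=` U].
  move=> [[G FG' Gp]|Gp] [[G' FG'' Gq]|Gq].
  - have [GG'|G'G] := tF G G' FG' FG''.
    + by exists (G' `|` G0); split; [exact: FG | left; exact: GG' | left | exact: sub].
    + by exists (G `|` G0); split; [exact: FG | left | left; exact: G'G | exact: sub].
  - by exists (G `|` G0); split; [exact: FG | left | right | exact: sub].
  - by exists (G' `|` G0); split; [exact: FG | right | left | exact: sub].
  - by exists G0; split => // z Gz; right.
split.
- by move=> x k k' Uk Uk'; have [H [[fH _ _] Hk Hk' _]] := common _ _ Uk Uk'; exact: fH Hk Hk'.
- move=> a x y k l Ux Uy; have [H [[_ lH _] Hx Hy sH]] := common _ _ Ux Uy.
  exact/sH/lH.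
- by right; case: gG0.
Qed.

Lemma linear_graph_total_extension G0 : linear_graph G0 ->
  exists G, [/\ linear_graph G, G0 `<=` G & forall x, exists k, G (x, k)].
Proof.
move=> gG0.
(* Zorn for [A `|` G0] rather than for graphs containing [G0], which would
   not be closed under the union of the empty chain *)
have [A [gA maxA]] : exists A, linear_graph (A `|` G0) /\
    forall B, A `<` B -> ~ linear_graph (B `|` G0).
  by apply: Zorn_bigcup => F FP tF; apply: linear_graph_chain_union.
exists (A `|` G0); split => [//|p|v]; first by right.
apply: contrapT => nv; have {}nv k : ~ (A `|` G0) (v, k) by move=> Gv; apply: nv; exists k.
pose B p := exists y a, (A `|` G0) (y, p.2) /\ p.1 = y + a *: v.
have gB := linear_graph_adjoin gA nv.
have AB : A `|` G0 `<=` B by move=> [y k] Ay; exists y, 0; rewrite scale0r addr0.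
have BG0 : B `|` G0 = B.
  by apply/seteqP; split => [p [//|G0p]|p Bp]; [apply: AB; right | left].
apply: (maxA B); last by rewrite BG0.
split=> [p Ap|BA]; first by apply: AB; left.
apply: (nv 0); left; apply: BA; exists 0, 1.
by split; [case: gA | rewrite /= scale1r add0r].
Qed.

Lemma linear_functional_extension (P : V -> Prop) (phi : V -> K) :
  subspace P -> (forall a x y, P x -> P y -> phi (a *: x + y) = a * phi x + phi y) ->
  exists F : dual V, forall x, P x -> F x = phi x.
Proof.
move=> [P0 Pl] phil.
have phi0 : phi 0 = 0.
  have := phil 1 0 0 P0 P0; rewrite scale1r addr0 mul1r.
  by move=> /esym/eqP; rewrite -subr_eq0 addrK => /eqP.
have gphi : linear_graph (fun p => P p.1 /\ p.2 = phi p.1).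
  split=> [x k k' [_ /= ->] [_ /= ->] // | a x y k l [Px /= ->] [Py /= ->] | ].
    by split; [exact: Pl | rewrite /= phil].
  by split; rewrite //= phi0.
have [G [[fG lG _] phiG totG]] := linear_graph_total_extension gphi.
pose F x := sval (cid (totG x)).
have FG x : G (x, F x) by rewrite /F; case: cid.
have Flin : linear (F : V -> K^o).
  by move=> a x y; apply: (fG (a *: x + y)); [exact: FG | exact: lG].
by exists (mklinear Flin) => x Px; apply: (fG x); [exact: FG | exact: phiG].
Qed.

End Extension.

Lemma dual_family r (e : 'I_r -> V) : injective (lincomb e) ->
  exists d : 'I_r -> dual V, forall j k, d j (e k) = (j == k)%:R.
Proof.
move=> inj; pose P w := exists a, w = lincomb e a.
pose coef w : 'rV[K]_r := if pselect (P w) is left Pw then sval (cid Pw) else 0.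
have coefE a : coef (lincomb e a) = a.
  rewrite /coef; case: pselect => [Pw|nPw]; last by exfalso; apply: nPw; exists a.
  by case: cid => a' /= /inj ->.
have sP : subspace P.
  split; first by exists 0; rewrite linear0.
  by move=> c x y [a ->] [b ->]; exists (c *: a + b); rewrite linearP.
have ext j : exists F : dual V, forall x, P x -> F x = coef x 0 j.
  apply: linear_functional_extension => // c x y [a ->] [b ->].
  by rewrite -linearP !coefE !mxE.
exists (fun j => sval (cid (ext j))) => j k; case: cid => F /= FE.
rewrite FE; last by exists (delta_mx 0 k); rewrite lincomb_delta.
by rewrite -lincomb_delta coefE mxE eqxx eq_sym.
Qed.

Lemma functionals_separate (x y : V) : (forall f : dual V, f x = f y) -> x = y.
Proof.
move=> fxy; apply/eqP; rewrite -subr_eq0; apply/negPn/negP => nz.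
have [|d dE] := @dual_family 1 (fun _ => x - y).
  apply: lincomb_inj => a; rewrite lincombE big_ord1 => /eqP.
  rewrite scaler_eq0 (negbTE nz) orbF => /eqP a0.
  by apply/rowP => j; rewrite ord1 a0 mxE.
by have := dE 0 0; rewrite eqxx linearB /= fxy subrr => /eqP; rewrite eq_sym oner_eq0.
Qed.

Lemma tensor_eq_contract (W : lmodType K) (s t : seq (V * W)) : tensor_eq s t ->
  forall g : dual W, \sum_(p <- s) (g p.2 : K) *: p.1 = \sum_(p <- t) (g p.2 : K) *: p.1.
Proof.
move=> st g; apply: functionals_separate => f; rewrite !linear_sum.
transitivity (\sum_(p <- s) (f p.1 : K) * g p.2).
  by apply: eq_bigr => p _; rewrite linearZ /= mulrC.
by rewrite st; apply: eq_bigr => p _; rewrite linearZ /= mulrC.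
Qed.

Definition lincomb_seq (t : seq V) := lincomb (fun j : 'I_(size t) => t`_j).

Lemma lincomb_seq_cons w t (a : 'rV[K]_(size t).+1) :
  lincomb_seq (w :: t) a = a 0 ord0 *: w + lincomb_seq t (\row_j a 0 (lift ord0 j)).
Proof. by rewrite !lincombE big_ord_recl; congr (_ + _); apply: eq_bigr => j _; rewrite mxE. Qed.

Lemma free_subfamily (s : seq V) : exists t : seq V,
  [/\ {subset t <= s}, injective (lincomb_seq t) &
      forall w, w \in s -> exists a, w = lincomb_seq t a].
Proof.
elim: s => [|w s [t [ts tfree tspan]]].
  by exists [::]; split => // a b _; apply/rowP => -[].
have [[a wa]|nw] := pselect (exists a, w = lincomb_seq t a).
  exists t; split => [x /ts xs|//|x]; first by rewrite inE xs orbT.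
  by rewrite inE => /predU1P [->|/tspan]; [exists a|].
exists (w :: t); split.
- by move=> x; rewrite !inE => /predU1P [->|/ts ->]; rewrite ?eqxx ?orbT.
- apply: lincomb_inj => a; rewrite lincomb_seq_cons; set a' := \row_j _ => a0.
  have a00 : a 0 ord0 = 0.
    apply: contrapT => /eqP na; apply: nw; exists (- (a 0 ord0)^-1 *: a').
    apply: (scalerI na); move/eqP: a0; rewrite addr_eq0 => /eqP ->.
    by rewrite linearZ scalerA mulrN mulfV // scaleN1r.
  have a'0 : a' = 0 by apply: tfree; rewrite linear0; move: a0; rewrite a00 scale0r add0r.
  apply/rowP => j; case: (unliftP ord0 j) => [j' ->|->]; last by rewrite a00 mxE.
  by have := congr1 (fun m : 'rV[K]_(size t) => m 0 j') a'0; rewrite !mxE.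
- move=> x; rewrite inE => /predU1P [->|/tspan [b ->]].
    by exists (delta_mx 0 ord0); rewrite lincomb_delta.
  exists (\row_j if unlift ord0 j is Some j' then b 0 j' else 0).
  rewrite lincomb_seq_cons mxE unlift_none scale0r add0r; congr (lincomb_seq t _).
  by apply/rowP => j; rewrite !mxE liftK.
Qed.

End Space.

Lemma image_basis (U W : lmodType K) (f : {linear U -> W}) (E : U -> Prop) :
  finitely_spanned E -> exists r (e : 'I_r -> W) (u : 'I_r -> U),
  [/\ injective (lincomb e), forall j, E (u j) /\ f (u j) = e j &
      forall z, E z -> exists a, f z = lincomb e a].
Proof.
move=> [n [b [Eb Espan]]].
have [t [tsub tfree tspan]] := free_subfamily [seq f (b j) | j <- enum 'I_n].
have pre (j : 'I_(size t)) : exists j', t`_j = f (b j').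
  by have /mapP [j' _ ->] := tsub _ (mem_nth 0 (ltn_ord j)); exists j'.
exists (size t), (fun j => t`_j), (fun j => b (sval (cid (pre j)))); split => //.
  by move=> j; case: cid => j' /= ->.
move=> z /Espan [c ->].
have a k := cid (tspan _ (map_f (fun j => f (b j)) (mem_enum predT k))).
exists (\sum_k c 0 k *: sval (a k)); rewrite lincombE !linear_sum; apply: eq_bigr => k _.
by rewrite !linearZ; case: (a k) => ak /= <-.
Qed.

Section PredicateDimension.
Variable n : nat.
Implicit Types W : 'rV[K]_n -> Prop.

Definition has_free_rows W r :=
  exists A : 'M[K]_(r, n), row_free A /\ forall j, W (row j A).

Lemma has_free_rows_le W r : has_free_rows W r -> (r <= n)%N.
Proof. by move=> [A [/eqP fA _]]; rewrite -fA; exact: rank_leq_col. Qed.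

Lemma has_free_rows0 W : has_free_rows W 0.
Proof. by exists 0; split; [rewrite /row_free mxrank0 | case]. Qed.

Definition dim_pred W : nat :=
  ex_maxn (P := fun r => `[< has_free_rows W r >])
    (ex_intro _ 0%N (asboolT (has_free_rows0 W)))
    (fun r Wr => has_free_rows_le (asboolW Wr)).

Lemma dim_predP W :
  has_free_rows W (dim_pred W) /\ forall r, has_free_rows W r -> (r <= dim_pred W)%N.
Proof.
rewrite /dim_pred; case: ex_maxnP => m /asboolP Wm maxm; split => // r Wr.
exact/maxm/asboolP.
Qed.

Lemma dim_pred_le W : (dim_pred W <= n)%N.
Proof. exact: has_free_rows_le (proj1 (dim_predP W)). Qed.

Lemma row_free_col_mx m (A : 'M[K]_(m, n)) (b : 'rV[K]_n) :
  row_free A -> ~~ (b <= A)%MS -> row_free (col_mx A b).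
Proof.
move=> fA nbA; rewrite /row_free -addsmxE.
have : (A < A + b)%MS by rewrite ltmxE addsmxSl addsmx_sub submx_refl (negbTE nbA).
rewrite ltmxErank => /andP [_]; move/eqP: fA => ->; rewrite -addn1 => ltA.
by rewrite eqn_leq ltA andbT addsmxE (leq_trans (rank_leq_row _)).
Qed.

Lemma free_rows_span W r (A : 'M[K]_(r, n)) b : (dim_pred W <= r)%N ->
  row_free A -> (forall j, W (row j A)) -> W b -> (b <= A)%MS.
Proof.
move=> le fA WA Wb; apply: contraT => nbA.
have : has_free_rows W (r + 1).
  exists (col_mx A b); split; first exact: row_free_col_mx.
  move=> j; rewrite -(splitK j); case: (split j) => j' /=; first by rewrite rowKu.
  by rewrite rowKd row_id.
by move/(proj2 (dim_predP W))/leq_trans/(_ le); rewrite addn1 ltnn.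
Qed.

Lemma dim_pred_strict W W' : subspace W -> (forall b, W b -> W' b) ->
  (exists b, W' b /\ ~ W b) -> (dim_pred W < dim_pred W')%N.
Proof.
move=> sW WW' [b [W'b nWb]]; rewrite ltnNge; apply/negP => le.
have [[A [fA WA]] _] := dim_predP W.
have bA := free_rows_span le fA (fun j => WW' _ (WA j)) W'b.
by apply: nWb; rewrite -(mulmxKpV bA) mulmx_sum_row; apply: subspace_sum.
Qed.

End PredicateDimension.

Lemma finitely_spanned_sub (V : lmodType K) n (v : 'I_n -> V) (E : V -> Prop) :
  subspace E -> (forall z, E z -> exists c, z = lincomb v c) -> finitely_spanned E.
Proof.
move=> sE Ev; pose W b := E (lincomb v b).
have [[A [fA WA]] _] := dim_predP W.
exists (dim_pred W), (fun j => lincomb v (row j A)); split => // z Ez.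
have [c zc] := Ev z Ez; rewrite zc in Ez *.
have cA : (c <= A)%MS by apply: (free_rows_span (leqnn _) fA WA).
by exists (c *m pinvmx A); rewrite -{1}(mulmxKpV cA) lincomb_mulmx lincombE.
Qed.

Lemma wide_mx_left_kernel n (A : 'M[K]_(n.+1, n)) :
  exists2 lam : 'rV[K]_n.+1, lam != 0 & lam *m A = 0.
Proof.
have : kermx A != 0.
  by rewrite kermx_eq0 /row_free; apply/negP => /eqP fA; have := rank_leq_col A; rewrite fA ltnn.
by case/rowV0Pn => lam /sub_kermxP lamA nz; exists lam.
Qed.

Lemma big_zip_nth (R : nmodType) T (s1 : seq K) (s2 : seq T) x0 (G : K -> T -> R) :
  size s1 = size s2 ->
  \sum_(p <- zip s1 s2) G p.1 p.2 = \sum_(k < size s2) G s1`_k (nth x0 s2 k).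
Proof.
elim: s1 s2 => [|c s1 IH] [|w s2] //=; first by rewrite big_nil big_ord0.
by move=> [e]; rewrite big_cons big_ord_recl (IH s2 e).
Qed.

End LinearAlgebra.

(* keeps [/=] from expanding linear combinations into their defining sums *)
Opaque lincomb.

Section ComoduleAction.
Variables (K : fieldType) (C : lmodType K) (cC : coalgebra C).
Local Notation dual V := {linear V -> K^o}.

Lemma conv_is_linear (g h : dual C) :
  linear (fun c : C => \sum_(p <- cDelta cC c) (g p.1 : K) * h p.2 : K^o).
Proof.
move=> a x y; rewrite (cDelta_lin cC a x y g h) big_cat big_map; congr (_ + _).
by rewrite regular_scaleE mulr_sumr; apply: eq_bigr => p _ /=; rewrite linearZ /= mulrA.
Qed.

Definition conv (g h : dual C) : dual C := mklinear (conv_is_linear g h).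

Section Action.
Variables (M : lmodType K) (rM : comodule cC M).

Lemma lfun_cact (f : dual M) g m :
  (f (cact rM g m) : K) = \sum_(p <- crho rM m) (f p.1 : K) * g p.2.
Proof. by rewrite /cact linear_sum; apply: eq_bigr => p _; rewrite linearZ /= mulrC. Qed.

Lemma cact_is_linear g : linear (cact rM g).
Proof.
move=> a x y; rewrite /cact (tensor_eq_contract (crho_lin rM a x y)) big_cat big_map.
by rewrite scaler_sumr; congr (_ + _); apply: eq_bigr => p _ /=; rewrite scalerA mulrC -scalerA.
Qed.

Section Instance.
Variable g : dual C.
(* keyed on [cact]: generic rules such as [linearD] need [(cact rM g)] explicitly *)
HB.instance Definition _ := GRing.isLinear.Build K M M *:%R (cact rM g) (cact_is_linear g).
End Instance.

Lemma crho0_pairing (f : dual M) (g : dual C) :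
  \sum_(p <- crho rM 0) (f p.1 : K) * g p.2 = 0.
Proof. by rewrite -lfun_cact (linear0 (cact rM g)) linear0. Qed.

Lemma cact_counit m : cact rM (ceps cC) m = m.
Proof. by rewrite /cact -crho_counit. Qed.

Lemma cact_conv g h m : cact rM g (cact rM h m) = cact rM (conv g h) m.
Proof.
apply: functionals_separate => f; rewrite [RHS]lfun_cact -[RHS]crho_coassoc.
rewrite [cact rM h m]/cact (linear_sum (cact rM g)) linear_sum; apply: eq_bigr => p _.
by rewrite (linearZ_LR (cact rM g)) linearZ /= lfun_cact mulrC.
Qed.

Lemma cact_orbit_subspace m : subspace (fun z => exists g : dual C, z = cact rM g m).
Proof.
split; first by exists \0; rewrite /cact big1 // => p _; rewrite /= scale0r.
move=> a _ _ [g ->] [h ->]; exists (a \*: g \+ h).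
by rewrite /cact scaler_sumr -big_split; apply: eq_bigr => p _ /=; rewrite scalerDl scalerA.
Qed.

End Action.

Lemma subcomod_cact (N : lmodType K) (rN : comodule cC N) P g x :
  subcomod rN P -> P x -> P (cact rN g x).
Proof.
move=> [P0 [Plin Prho]] /Prho [t [rho_t Pt]]; rewrite /cact (tensor_eq_contract rho_t g).
elim: t Pt {rho_t} => [|p t IH] Pt; first by rewrite big_nil.
by rewrite big_cons; apply: Plin; [apply: Pt; left | apply: IH => q tq; apply: Pt; right].
Qed.

Lemma zero_comod_map (A B : lmodType K) (rA : comodule cC A) (rB : comodule cC B) :
  comod_map rA rB (fun _ => 0).
Proof.
split=> [a x y|x f g]; first by rewrite scaler0 addr0.
by rewrite big_map crho0_pairing big1 // => p _; rewrite linear0 mul0r.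
Qed.

Section SpanComodule.
Variables (V : lmodType K) (rV : comodule cC V) (r : nat) (e : 'I_r -> V).
Variable d : 'I_r -> dual V.
Hypothesis dE : forall j k, d j (e k) = (j == k)%:R.
Hypothesis span_stable : forall g k, exists a, cact rV g (e k) = lincomb e a.

Lemma dual_lincomb j a : (d j (lincomb e a) : K) = a 0 j.
Proof.
rewrite lincombE linear_sum (bigD1 j) //= big1 ?addr0 => [|k nk].
  by rewrite linearZ /= dE eqxx regular_scaleE mulr1.
by rewrite linearZ /= dE eq_sym (negbTE nk) regular_scaleE mulr0.
Qed.

Lemma span_coords w : (exists a, w = lincomb e a) -> w = \sum_j (d j w : K) *: e j.
Proof. by move=> [a ->]; rewrite {1}lincombE; apply: eq_bigr => j _; rewrite dual_lincomb. Qed.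

Lemma cact_span g a : exists b, cact rV g (lincomb e a) = lincomb e b.
Proof.
have b k := cid (span_stable g k); exists (\sum_k a 0 k *: sval (b k)).
rewrite [lincomb e a]lincombE (linear_sum (cact rV g)) linear_sum; apply: eq_bigr => k _.
by rewrite (linearZ_LR (cact rV g)) linearZ; case: (b k) => bk /= ->.
Qed.

(* the matrix coefficients: [rV (e k) = \sum_j e j (x) span_coef j k] *)
Definition span_coef j k : C := \sum_(q <- crho rV (e k)) (d j q.1 : K) *: q.2.

Definition rho_span a : seq ('rV[K]_r * C) :=
  [seq (delta_mx 0 j, lincomb (span_coef j) a) | j <- index_enum 'I_r].

Lemma rho_span_sum (R : nmodType) (F : 'rV[K]_r * C -> R) a :
  \sum_(p <- rho_span a) F p = \sum_j F (delta_mx 0 j, lincomb (span_coef j) a).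
Proof. by rewrite big_map. Qed.

Lemma lfun_span_coef (g : dual C) j a :
  (g (lincomb (span_coef j) a) : K) = d j (cact rV g (lincomb e a)).
Proof.
rewrite !lincombE (linear_sum (cact rV g)) !linear_sum; apply: eq_bigr => k _.
rewrite (linearZ_LR (cact rV g)) !linearZ /= lfun_cact linear_sum; congr (_ * _).
by apply: eq_bigr => q _; rewrite linearZ.
Qed.

Lemma rho_span_lin (b : K) (x y : 'rV[K]_r) :
  tensor_eq (rho_span (b *: x + y)) ([seq (b *: p.1, p.2) | p <- rho_span x] ++ rho_span y).
Proof.
move=> f g; rewrite big_cat [X in _ = X + _]big_map !rho_span_sum -big_split.
apply: eq_bigr => j _.
by rewrite linearP linearD !linearZ /= !regular_scaleE mulrDr !mulrA [_ * b]mulrC.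
Qed.

Lemma lfun_span_coef_delta (g : dual C) j l :
  (g (span_coef j l) : K) = d j (cact rV g (e l)).
Proof. by rewrite -(lincomb_delta (span_coef j)) lfun_span_coef lincomb_delta. Qed.

Lemma conv_span_coef (g h : dual C) a j :
  (conv g h (lincomb (span_coef j) a) : K) =
  \sum_l (g (span_coef j l) : K) * h (lincomb (span_coef l) a).
Proof.
rewrite lfun_span_coef -cact_conv (span_coords (cact_span h a)).
rewrite (linear_sum (cact rV g)) linear_sum.
apply: eq_bigr => l _; rewrite lfun_span_coef lfun_span_coef_delta.
by rewrite (linearZ_LR (cact rV g)) linearZ /= regular_scaleE mulrC.
Qed.

Lemma rho_span_coassoc a (f : dual 'rV[K]_r) (g h : dual C) :
  \sum_(p <- rho_span a) ((\sum_(q <- rho_span p.1) (f q.1 : K) * g q.2) * h p.2) =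
  \sum_(p <- rho_span a) ((f p.1 : K) * (\sum_(q <- cDelta cC p.2) (g q.1 : K) * h q.2)).
Proof.
rewrite !rho_span_sum /=; under eq_bigr do rewrite rho_span_sum mulr_suml.
rewrite exchange_big /=; apply: eq_bigr => l _.
rewrite -[\sum_(q <- cDelta cC _) _]/(conv g h _ : K) conv_span_coef mulr_sumr.
by apply: eq_bigr => j _; rewrite lincomb_delta mulrA.
Qed.

Lemma rho_span_counit a : a = \sum_(p <- rho_span a) (ceps cC p.2 : K) *: p.1.
Proof.
rewrite rho_span_sum {1}(row_sum_delta a); apply: eq_bigr => j _ /=.
by rewrite lfun_span_coef cact_counit dual_lincomb.
Qed.

Definition span_comodule : comodule cC 'rV[K]_r :=
  Comodule rho_span_lin rho_span_coassoc rho_span_counit.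

Lemma lincomb_cact_span g a :
  lincomb e (cact span_comodule g a) = cact rV g (lincomb e a).
Proof.
rewrite {1}/cact rho_span_sum linear_sum [RHS](span_coords (cact_span g a)).
by apply: eq_bigr => j _ /=; rewrite linearZ lincomb_delta lfun_span_coef.
Qed.

End SpanComodule.
End ComoduleAction.

Section QuasiFinite.
Variables (K : fieldType) (C : lmodType K) (cC : coalgebra C).
Variables (L : Type) (X : L -> lmodType K) (rX : forall i, comodule cC (X i)).

Definition infinite_pred (J : L -> Prop) := forall s : seq L, exists i, J i /\ ~ List.In i s.

Lemma infinite_pred_injection J : infinite_pred J ->
  forall N, exists idx : 'I_N -> L, injective idx /\ forall j, J (idx j).
Proof.
move=> Jinf N; suff [idx [s [? ? _]]] : exists (idx : 'I_N -> L) (s : seq L),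
    [/\ injective idx, forall j, J (idx j) & forall j, List.In (idx j) s] by exists idx.
elim: N => [|N [idx [s [idx_inj Jidx idx_s]]]].
  by have [i _] := Jinf [::]; exists (fun=> i), [::]; split => -[].
have [i [Ji i_s]] := Jinf s.
exists (fun j => if unlift ord_max j is Some j' then idx j' else i), (i :: s).
split => [j1 j2|j|j]; last 2 first.
- by case: unliftP.
- by case: unliftP => [j' _|_]; [right|left].
case: (unliftP ord_max j1) => [j1' ->|->]; case: (unliftP ord_max j2) => [j2' ->|->] //.
- by move/idx_inj ->.
- by move=> e; case: i_s; rewrite -e.
- by move=> e; case: i_s; rewrite e.
Qed.

Definition dsum_at S (F : forall i, S -> X i) i (s : S) : forall k, X k :=
  fun k => if pselect (k = i) is left _ then F k s else 0.

Lemma dsum_at_hom S (rS : comodule cC S) F i :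
  comod_map rS (rX i) (F i) -> dsum_hom rX rS (dsum_at F i).
Proof.
move=> Fi; split=> [s|k].
  exists [:: i] => k; rewrite /dsum_at; case: (pselect (k = i)) => [e _|_ /(_ erefl) []].
  by left; rewrite e.
by rewrite /dsum_at; case: (pselect (k = i)) => [e|_]; [subst k | exact: zero_comod_map].
Qed.

Lemma dsum_at_combination S (F : forall i, S -> X i) m (idx : 'I_m -> L) (lam : 'rV[K]_m) a j0 :
  injective idx ->
  \sum_j lam 0 j *: dsum_at F (idx j) a (idx j0) = lam 0 j0 *: F (idx j0) a.
Proof.
move=> idx_inj; rewrite (bigD1 j0) //= big1 ?addr0 => [|j nj].
  by rewrite /dsum_at; case: pselect.
rewrite /dsum_at; case: pselect => [/idx_inj e|_]; last by rewrite scaler0.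
by move: nj; rewrite e eqxx.
Qed.

Hypothesis QF : quasi_finite_dsum rX.

Lemma finite_nonzero_comod_maps S (rS : comodule cC S) (F : forall i, S -> X i) :
  simple_comod rS -> exists s : seq L,
    forall i, comod_map rS (rX i) (F i) -> (exists a, F i a <> 0) -> List.In i s.
Proof.
move=> Ssimple; have [fs [_ fs_span]] := QF Ssimple.
apply: contrapT => Finf.
have Jinf : infinite_pred (fun i => comod_map rS (rX i) (F i) /\ exists a, F i a <> 0).
  move=> s; apply: contrapT => nJ; apply: Finf; exists s => i Fi Fnz.
  by apply: contrapT => nis; apply: nJ; exists i.
have [idx [idx_inj Jidx]] := infinite_pred_injection Jinf (size fs).+1.
have coef j := cid (fs_span _ (dsum_at_hom (proj1 (Jidx j)))).
pose A := \matrix_(j, k) (sval (coef j))`_k : 'M[K]_((size fs).+1, size fs).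
have [lam lam_nz lamA] := wide_mx_left_kernel A.
have [j0 lam_j0] : exists j0, lam 0 j0 != 0.
  apply/existsP; move: lam_nz; apply: contraNT; rewrite negb_exists => /forallP lam0.
  by apply/eqP/rowP => j; rewrite mxE; apply/eqP/negbNE/lam0.
have [a Fa] := proj2 (Jidx j0).
pose w k := nth (fun _ _ => 0) fs k a (idx j0).
have coords j : dsum_at F (idx j) a (idx j0) = lincomb w (row j A).
  have [c_size c_span] := svalP (coef j); rewrite c_span lincombE.
  rewrite (big_zip_nth (fun _ k => 0 : X k) (fun x f => x *: f a (idx j0)) c_size).
  by apply: eq_bigr => k _; rewrite !mxE.
have : lam 0 j0 *: F (idx j0) a = 0.
  rewrite -(dsum_at_combination F lam a j0 idx_inj); under eq_bigr do rewrite coords.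
  by rewrite -lincomb_mulmx lamA linear0.
by move/eqP; rewrite scaler_eq0 (negbTE lam_j0) => /eqP.
Qed.

End QuasiFinite.

Section RationalPart.
Variables (K : fieldType) (C : lmodType K) (cC : coalgebra C).
Variables (L : Type) (X : L -> lmodType K) (rX : forall i, comodule cC (X i)).
Hypothesis QF : quasi_finite_dsum rX.
Variables (M : lmodType K) (rM : comodule cC M) (phi : forall i, {linear M -> X i}).
Hypothesis phi_cact : forall g m i, phi i (cact rM g m) = cact (rX i) g (phi i m).
Local Notation dual V := {linear V -> K^o}.
Implicit Types E : M -> Prop.

Definition submodule E := subspace E /\ forall g x, E x -> E (cact rM g x).
Definition support E i := exists2 z, E z & phi i z <> 0.
Definition finite_support E := exists s : seq L, forall i, support E i -> List.In i s.

Lemma not_support E i z : ~ support E i -> E z -> phi i z = 0.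
Proof. by move=> nEi Ez; apply: contrapT => phiz; apply: nEi; exists z. Qed.

Section Quotient.
Variables E E1 : M -> Prop.
Hypotheses (subE : submodule E) (finE : finitely_spanned E) (E1E : forall z, E1 z -> E z).
Hypothesis E1_maximal : forall E', submodule E' -> (forall z, E1 z -> E' z) ->
  (forall z, E' z -> E z) -> (forall z, E' z -> E1 z) \/ (forall z, E z -> E' z).

Section Witness.
Variable i0 : L.
Hypotheses (Ei0 : support E i0) (nE1i0 : ~ support E1 i0).

Lemma ker_phi_maximal z : E z -> phi i0 z = 0 -> E1 z.
Proof.
have [[E0 Elin] Ecact] := subE.
have subK : submodule (fun z => E z /\ phi i0 z = 0).
  split; [split|].
  - by split; rewrite ?linear0.
  - move=> a x y [Ex px] [Ey py]; split; first exact: Elin.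
    by rewrite linearP px py scaler0 addr0.
  - move=> g x [Ex px]; split; first exact: Ecact.
    by rewrite phi_cact px (linear0 (cact (rX i0) g)).
have E1K z' : E1 z' -> E z' /\ phi i0 z' = 0.
  by move=> E1z'; split; [exact: E1E | exact: not_support nE1i0 E1z'].
have [KE1|EK] := E1_maximal subK E1K (fun _ => @proj1 _ _); first by move=> Ez pz; exact: KE1.
by case: Ei0 => x /EK [_ ->] /(_ erefl).
Qed.

(* [phi i0] identifies [E / E1] with [phi i0 E], which has the basis [e],
   lifted to [u] in [E] *)
Section Basis.
Variables (r : nat) (e : 'I_r -> X i0) (u : 'I_r -> M) (d : 'I_r -> dual (X i0)).
Hypotheses (e_free : injective (lincomb e)) (u_E : forall j, E (u j) /\ phi i0 (u j) = e j).
Hypotheses (image_span : forall z, E z -> exists a, phi i0 z = lincomb e a)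
  (dE : forall j k, d j (e k) = (j == k)%:R).

Lemma image_stable g k : exists a, cact (rX i0) g (e k) = lincomb e a.
Proof. by case: (u_E k) => Eu <-; rewrite -phi_cact; apply/image_span/(proj2 subE). Qed.

Local Notation S := (span_comodule dE image_stable).

Definition image_lift : {linear 'rV[K]_r -> M} := lincomb u.

Lemma image_lift_E a : E (image_lift a).
Proof. by apply: subspace_lincomb (proj1 subE) _ => j; case: (u_E j). Qed.

Lemma phi_image_lift a : phi i0 (image_lift a) = lincomb e a.
Proof.
rewrite /image_lift !lincombE linear_sum; apply: eq_bigr => j _.
by rewrite linearZ; case: (u_E j) => _ ->.
Qed.

Lemma phi_image_lift_support i z : ~ support E1 i -> E z ->
  exists a, phi i z = phi i (image_lift a).
Proof.
move=> nE1i Ez; have [a phia] := image_span Ez; exists a; apply/eqP; rewrite -subr_eq0.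
have [[_ Elin] _] := subE.
have Eza : E (z - image_lift a).
  by rewrite addrC -scaleN1r; apply: Elin => //; exact: image_lift_E.
rewrite -linearB (not_support nE1i) //; apply: ker_phi_maximal Eza _.
by rewrite linearB phia phi_image_lift subrr.
Qed.

Lemma phi_image_lift_cact i g a : ~ support E1 i ->
  phi i (image_lift (cact S g a)) = cact (rX i) g (phi i (image_lift a)).
Proof.
move=> nE1i; have [[_ Elin] Ecact] := subE.
have Ez : E (image_lift (cact S g a) - cact rM g (image_lift a)).
  by rewrite addrC -scaleN1r; apply: Elin; [apply: Ecact|]; exact: image_lift_E.
have /(not_support nE1i) : E1 (image_lift (cact S g a) - cact rM g (image_lift a)).
  apply: ker_phi_maximal Ez _.
  by rewrite linearB phi_cact !phi_image_lift lincomb_cact_span subrr.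
by rewrite linearB phi_cact => /eqP; rewrite subr_eq0 => /eqP.
Qed.

Lemma image_lift_comod_map i : ~ support E1 i ->
  comod_map S (rX i) (fun a => phi i (image_lift a)).
Proof.
move=> nE1i; split=> [b x y|a f g]; first by rewrite !linearP.
rewrite big_map -lfun_cact -phi_image_lift_cact // [cact S g a]/cact.
rewrite (linear_sum image_lift) (linear_sum (phi i)) linear_sum; apply: eq_bigr => p _ /=.
by rewrite !linearZ /= regular_scaleE mulrC.
Qed.

Lemma span_comodule_simple : simple_comod S.
Proof.
split.
  have [x Ex phix] := Ei0; have [a phia] := image_span Ex.
  by exists a => a0; apply: phix; rewrite phia a0 linear0.
move=> P subP; have [P0 [Plin _]] := subP.
pose E' z := E z /\ exists2 a, P a & phi i0 z = lincomb e a.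
have subE' : submodule E'.
  have [[E0 Elin] Ecact] := subE.
  split; [split|].
  - by split => //; exists 0; rewrite ?linear0.
  - move=> b x y [Ex [a Pa ea]] [Ey [a' Pa' ea']]; split; first exact: Elin.
    by exists (b *: a + a'); [exact: Plin | rewrite !linearP ea ea'].
  - move=> g x [Ex [a Pa ea]]; split; first exact: Ecact.
    by exists (cact S g a); [exact: subcomod_cact | rewrite phi_cact ea lincomb_cact_span].
have E1E' z : E1 z -> E' z.
  by move=> E1z; split; [exact: E1E | exists 0; rewrite // linear0 (not_support nE1i0)].
have [E'E1|EE'] := E1_maximal subE' E1E' (fun _ => @proj1 _ _); [left => a Pa | right => a].
  apply: e_free; rewrite linear0 -phi_image_lift; apply: (not_support nE1i0); apply: E'E1.
  by split; [exact: image_lift_E | exists a; rewrite ?phi_image_lift].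
have [_ [a' Pa']] := EE' _ (image_lift_E a).
by rewrite phi_image_lift => /e_free ->.
Qed.

Lemma new_support_finite_basis :
  exists s : seq L, forall i, support E i -> ~ support E1 i -> List.In i s.
Proof.
have [s Hs] := finite_nonzero_comod_maps QF (fun i a => phi i (image_lift a))
  span_comodule_simple.
exists s => i [x Ex phix] nE1i; apply: Hs; first exact: image_lift_comod_map.
by have [a xa] := phi_image_lift_support nE1i Ex; rewrite xa in phix; exists a.
Qed.

End Basis.

Lemma new_support_finite_witness :
  exists s : seq L, forall i, support E i -> ~ support E1 i -> List.In i s.
Proof.
have [r [e [u [e_free u_E image_span]]]] := image_basis (phi i0) finE.
have [d dE] := dual_family e_free.
exact: new_support_finite_basis e_free u_E image_span dE.
Qed.

End Witness.

Lemma new_support_finite :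
  exists s : seq L, forall i, support E i -> ~ support E1 i -> List.In i s.
Proof.
have [[i0 [Ei0 nE1i0]]|none] := pselect (exists i0, support E i0 /\ ~ support E1 i0).
  exact: new_support_finite_witness Ei0 nE1i0.
by exists [::] => i Ei nE1i; apply: none; exists i.
Qed.

End Quotient.

Section FiniteDimension.
Variables (n : nat) (v : 'I_n -> M).

Definition in_span E := forall z, E z -> exists c, z = lincomb v c.
Definition span_dim E := dim_pred (fun c => E (lincomb v c)).

Lemma span_dim_strict E E' : subspace E -> in_span E' -> (forall z, E z -> E' z) ->
  (exists z, E' z /\ ~ E z) -> (span_dim E < span_dim E')%N.
Proof.
move=> [E0 Elin] E'v EE' [z [E'z nEz]]; apply: dim_pred_strict.
- by split=> [|a x y]; rewrite ?linear0 ?linearP //; exact: Elin.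
- by move=> c; exact: EE'.
- by have [c zc] := E'v z E'z; exists c; rewrite -zc.
Qed.

Lemma zero_submodule : submodule (fun z => z = 0).
Proof.
split; first by split => // a x y -> ->; rewrite scaler0 addr0.
by move=> g x ->; rewrite (linear0 (cact rM g)).
Qed.

Lemma maximal_proper_submodule E : submodule E -> in_span E -> (exists z, E z /\ z <> 0) ->
  exists E1, [/\ submodule E1, forall z, E1 z -> E z, exists z, E z /\ ~ E1 z &
    forall E', submodule E' -> (forall z, E1 z -> E' z) -> (forall z, E' z -> E z) ->
      (forall z, E' z -> E1 z) \/ (forall z, E z -> E' z)].
Proof.
move=> subE Ev [z0 [Ez0 z0_nz]].
pose proper k := exists E1, [/\ submodule E1, forall z, E1 z -> E z,
  exists z, E z /\ ~ E1 z & span_dim E1 = k].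
have [k [[E1 [subE1 E1E E1_proper <-]] maxE1]] :
    exists k, proper k /\ forall j, proper j -> (j <= k)%N.
  apply: (exists_max_nat (b := n)) => [|k [E1 [_ _ _ <-]]]; last exact: dim_pred_le.
  by exists (span_dim (fun z => z = 0)), (fun z => z = 0); split;
    [exact: zero_submodule | move=> z ->; case: subE => [[]] | exists z0 | ].
exists E1; split => // E' subE' E1E' E'E.
have [EE'|nEE'] := pselect (forall z, E z -> E' z); [by right | left => z E'z].
apply: contrapT => nE1z.
have E'_proper : exists z, E z /\ ~ E' z.
  by apply: contrapT => nex; apply: nEE' => x Ex; apply: contrapT => nE'x; apply: nex; exists x.
have := maxE1 _ (ex_intro _ E' (And4 subE' E'E E'_proper erefl)).
rewrite leqNgt => /negP; apply; apply: span_dim_strict (proj1 subE1) _ E1E' _.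
- by move=> x /E'E /Ev.
- by exists z.
Qed.

Lemma submodule_finite_support E : submodule E -> in_span E -> finite_support E.
Proof.
have [k] := ubnP (span_dim E); elim: k E => // k IH E /ltnSE dimE subE Ev.
have [[z [Ez z_nz]]|zero] := pselect (exists z, E z /\ z <> 0); last first.
  exists [::] => i [z Ez]; case; apply: contrapT => phiz_nz; apply: zero; exists z.
  by split => // z0; apply: phiz_nz; rewrite z0 linear0.
have [E1 [subE1 E1E [z1 [Ez1 nE1z1]] maxE1]] :=
  maximal_proper_submodule subE Ev (ex_intro _ z (conj Ez z_nz)).
have E1v : in_span E1 by move=> x /E1E /Ev.
have [s1 suppE1] : finite_support E1.
  apply: (IH E1 _ subE1 E1v); apply: leq_trans dimE.
  by apply: span_dim_strict (proj1 subE1) Ev E1E _; exists z1.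
have [s2 suppE] := new_support_finite subE (finitely_spanned_sub (proj1 subE) Ev) E1E maxE1.
exists (s1 ++ s2) => i Ei; apply/List.in_or_app.
by have [E1i|nE1i] := pselect (support E1 i); [left; exact: suppE1 | right; exact: suppE].
Qed.

End FiniteDimension.

Lemma cact_orbit_finite_support m :
  finite_support (fun z => exists g : dual C, z = cact rM g m).
Proof.
pose v k := (nth (0, 0) (crho rM m) k).1.
apply: (@submodule_finite_support _ (fun k : 'I_(size (crho rM m)) => v k)).
  split; first exact: cact_orbit_subspace.
  by move=> g _ [h ->]; exists (conv cC g h); rewrite cact_conv.
move=> _ [g ->]; exists (\row_k (g (nth (0, 0) (crho rM m) k).2 : K)).
by rewrite lincombE /cact (big_nth (0, 0)) big_mkord; apply: eq_bigr => k _; rewrite mxE.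
Qed.

Lemma rational_fin_supp m : fin_supp (fun i => phi i m).
Proof.
have [s supp_s] := cact_orbit_finite_support m.
by exists s => i phim; apply: supp_s; exists m => //; exists (ceps cC); rewrite cact_counit.
Qed.

End RationalPart.

Section PairComodule.
Variables (K : fieldType) (C : lmodType K) (cC : coalgebra C).
Variables (A B : lmodType K) (rA : comodule cC A) (rB : comodule cC B).
Local Notation dual V := {linear V -> K^o}.
Local Notation AB := (A * B)%type.

Lemma linl_is_linear : linear (fun a : A => (a, 0) : AB).
Proof.
move=> c x y; transitivity ((c *: x + y, c *: (0 : B) + 0) : AB) => //.
by rewrite scaler0 addr0.
Qed.

Lemma linr_is_linear : linear (fun b : B => (0, b) : AB).
Proof.
move=> c x y; transitivity ((c *: (0 : A) + 0, c *: x + y) : AB) => //.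
by rewrite scaler0 addr0.
Qed.

Definition linl : {linear A -> AB} := mklinear linl_is_linear.
Definition linr : {linear B -> AB} := mklinear linr_is_linear.

Lemma linlE a : linl a = (a, 0). Proof. by []. Qed.
Lemma linrE b : linr b = (0, b). Proof. by []. Qed.

Lemma linl_add_linr (x : AB) : linl x.1 + linr x.2 = x.
Proof.
case: x => a b; rewrite linlE linrE.
by transitivity ((a + 0, 0 + b) : AB) => //; rewrite addr0 add0r.
Qed.

Opaque linl linr.

Definition rho_pair (x : AB) : seq (AB * C) :=
  [seq (linl p.1, p.2) | p <- crho rA x.1] ++ [seq (linr q.1, q.2) | q <- crho rB x.2].

Lemma rho_pair_sum (R : nmodType) (F : AB * C -> R) x :
  \sum_(p <- rho_pair x) F p =
  \sum_(p <- crho rA x.1) F (linl p.1, p.2) + \sum_(q <- crho rB x.2) F (linr q.1, q.2).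
Proof. by rewrite big_cat !big_map. Qed.

Lemma rho_pair_lin (a : K) (x y : AB) :
  tensor_eq (rho_pair (a *: x + y)) ([seq (a *: p.1, p.2) | p <- rho_pair x] ++ rho_pair y).
Proof.
move=> f g; rewrite rho_pair_sum [in RHS]big_cat [in RHS]big_map !rho_pair_sum /=.
rewrite (crho_lin rA a x.1 y.1 (f \o linl)) (crho_lin rB a x.2 y.2 (f \o linr)).
rewrite !big_cat !big_map addrACA; congr (_ + _ + _).
  by apply: eq_bigr => p _ /=; rewrite linearZ.
by apply: eq_bigr => p _ /=; rewrite linearZ.
Qed.

Lemma rho_pair_coassoc (m : AB) (f : dual AB) (g h : dual C) :
  \sum_(p <- rho_pair m) ((\sum_(q <- rho_pair p.1) (f q.1 : K) * g q.2) * h p.2) =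
  \sum_(p <- rho_pair m) ((f p.1 : K) * (\sum_(q <- cDelta cC p.2) (g q.1 : K) * h q.2)).
Proof.
have pair_l u : \sum_(q <- rho_pair (linl u)) (f q.1 : K) * g q.2 =
    \sum_(q <- crho rA u) ((f \o linl) q.1 : K) * g q.2.
  by rewrite rho_pair_sum linlE /= (crho0_pairing rB (f \o linr)) addr0.
have pair_r w : \sum_(q <- rho_pair (linr w)) (f q.1 : K) * g q.2 =
    \sum_(q <- crho rB w) ((f \o linr) q.1 : K) * g q.2.
  by rewrite rho_pair_sum linrE /= (crho0_pairing rA (f \o linl)) add0r.
rewrite !rho_pair_sum /=; under eq_bigr do rewrite pair_l.
under [X in _ + X = _]eq_bigr do rewrite pair_r.
by congr (_ + _); apply: crho_coassoc.
Qed.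

Lemma rho_pair_cact (g : dual C) x :
  \sum_(p <- rho_pair x) (g p.2 : K) *: p.1 = linl (cact rA g x.1) + linr (cact rB g x.2).
Proof.
rewrite rho_pair_sum /cact !linear_sum.
by congr (_ + _); apply: eq_bigr => p _; rewrite linearZ.
Qed.

Lemma rho_pair_counit x : x = \sum_(p <- rho_pair x) (ceps cC p.2 : K) *: p.1.
Proof. by rewrite rho_pair_cact !cact_counit linl_add_linr. Qed.

Definition pair_comodule : comodule cC AB :=
  Comodule rho_pair_lin rho_pair_coassoc rho_pair_counit.

Lemma cact_pair g x : cact pair_comodule g x = (cact rA g x.1, cact rB g x.2).
Proof. exact: etrans (rho_pair_cact g x) (linl_add_linr (_, _)). Qed.

End PairComodule.

Section FiniteProduct.
Variables (K : fieldType) (C : lmodType K) (cC : coalgebra C).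
Variables (L : Type) (X : L -> lmodType K) (rX : forall i, comodule cC (X i)).

Definition zero_comodule : comodule cC 'rV[K]_0.
Proof.
apply: (@Comodule _ _ _ _ (fun _ => [::])) => [a x y f g|m f g h|m]; rewrite ?big_nil //.
exact: thinmx0.
Defined.

Fixpoint prod_space (s : seq L) : lmodType K :=
  if s is i :: s' then (X i * prod_space s')%type else 'rV[K]_0.

Fixpoint prod_comodule (s : seq L) : comodule cC (prod_space s) :=
  match s return comodule cC (prod_space s) with
  | [::] => zero_comodule
  | i :: s' => pair_comodule (rX i) (prod_comodule s')
  end.

Fixpoint prod_embed (s : seq L) : prod_space s -> forall j, X j :=
  match s return prod_space s -> forall j, X j with
  | [::] => fun _ _ => 0
  | i :: s' => fun m j =>
      (if pselect (i = j) is left e then eq_rect i X m.1 j e else 0) + prod_embed m.2 j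
  end.

Fixpoint prod_proj (s : seq L) (x : forall j, X j) : prod_space s :=
  match s return prod_space s with
  | [::] => 0
  | i :: s' => (x i, prod_proj s' x)
  end.

Lemma prod_embed_linear s a (m m' : prod_space s) j :
  prod_embed (a *: m + m') j = a *: prod_embed m j + prod_embed m' j.
Proof.
elim: s m m' => [|i s IH] m m' /=; first by rewrite scaler0 addr0.
rewrite IH scalerDr addrACA; congr (_ + _).
by case: pselect => [e|_]; [subst j | rewrite scaler0 addr0].
Qed.

Lemma prod_embed_out s (m : prod_space s) j : ~ List.In j s -> prod_embed m j = 0.
Proof.
elim: s m => [|i s IH] m //= /Decidable.not_or [nij njs].
by rewrite IH //; case: pselect => [//|_]; rewrite addr0.
Qed.

Lemma prod_embed_proj s x j : List.NoDup s -> List.In j s -> prod_embed (prod_proj s x) j = x j.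
Proof.
elim: s => [|i s IH] //= /List.NoDup_cons_iff [nis nds] js.
case: pselect => [e|nij]; first by subst j; rewrite prod_embed_out // addr0.
by rewrite add0r IH //; case: js.
Qed.

Lemma prod_embed_inj s (m m' : prod_space s) : List.NoDup s ->
  (forall j, prod_embed m j = prod_embed m' j) -> m = m'.
Proof.
elim: s m m' => [|i s IH] m m' /=; first by rewrite (thinmx0 m) (thinmx0 m').
case: m m' => m1 m2 [m1' m2'] /List.NoDup_cons_iff [nis nds] /= mm'.
have -> : m1 = m1'.
  have := mm' i; case: pselect => [e|[]] //.
  by rewrite (Prop_irrelevance e erefl) /= !prod_embed_out // !addr0.
congr (_, _); apply: IH => // j; have := mm' j.
by case: pselect => [e|_]; [subst j; rewrite !prod_embed_out | rewrite !add0r].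
Qed.

Lemma prod_embed_cact s g (m : prod_space s) j :
  prod_embed (cact (prod_comodule s) g m) j = cact (rX j) g (prod_embed m j).
Proof.
elim: s m => [|i s IH] m /=; first by rewrite (linear0 (cact (rX j) g)).
rewrite cact_pair /= IH (linearD (cact (rX j) g)); congr (_ + _).
by case: pselect => [e|_]; [subst j | rewrite (linear0 (cact (rX j) g))].
Qed.

Lemma fin_supp_rational x : fin_supp x -> in_Rat_prod rX x.
Proof.
move=> [s0 supp_s0]; pose s := List.nodup (fun i j => pselect (i = j)) s0.
have nds : List.NoDup s := List.NoDup_nodup _ s0.
exists (prod_space s), (prod_comodule s), (@prod_embed s).
split; [exact: prod_embed_linear | split; [by move=> m m'; exact: prod_embed_inj|]].
split; [by move=> g m j; exact: prod_embed_cact | exists (prod_proj s x) => j].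
have [js|njs] := pselect (List.In j s); first exact: prod_embed_proj.
rewrite prod_embed_out //; apply: contrapT => xj_nz; apply/njs/List.nodup_In/supp_s0.
by move=> xj0; apply: xj_nz; rewrite xj0.
Qed.

End FiniteProduct.

Unset Implicit Arguments.

Theorem lemma2p5 (K : fieldType) (C : lmodType K) (cC : coalgebra C)
  (L : Type) (X : L -> lmodType K) (rX : forall i, comodule cC (X i)) :
  (forall i, exists x : X i, x <> 0) ->
  quasi_finite_dsum rX ->
  forall x : (forall i, X i), in_Rat_prod rX x <-> fin_supp x.
Proof.
(* [fin_supp] ignores zero components, so the X_i need not be nonzero *)
move=> _ QF x; split; last exact: fin_supp_rational.
move=> [M [rM [phi [phi_lin [_ [phi_cact [m phim]]]]]]].
pose phiL i : {linear M -> X i} := mklinear (fun a m m' => phi_lin a m m' i).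
have [s supp_s] := rational_fin_supp QF (phi := phiL) (fun g m i => phi_cact g m i) m.
by exists s => i; rewrite -phim; exact: supp_s.
Qed.
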